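(* Assume there is $\xi>0$ such that $\|\mathbf{n}\cdot\nabla|\phi(\theta)\rangle\|_2\le\xi$ for all $\theta\in\mathbb{R}^K$ and all unit vectors $\mathbf{n}\in\mathbb{R}^K$. Suppose the guiding function $\alpha$ is parameterised by a rectifier neural network with one hidden layer of $L\ge 2K$ neurons, with $W(A)=e^{-A}$ and prior guiding function $F(\theta)=1$. Then for every $\theta\in\mathbb{R}^K$ and every $x<1$, $$\inf_{|\widetilde\psi(\lambda)\rangle\in\mathcal{V}_x}\big\||\widetilde\psi(\lambda)\rangle-|\phi(\theta)\rangle\big\|_2=0 .$$
   Context: Fix $n$ qubits, $\mathcal{H}=(\mathbb{C}^2)^{\otimes n}$, and a parameterised circuit with normalised states $|\phi(\theta)\rangle=U(\theta)|0\rangle^{\otimes n}$, $U(\theta)$ unitary, defined and differentiable for all $\theta\in\Theta=\mathbb{R}^K$; $\|\cdot\|_2$ is the Euclidean norm on $\mathcal{H}$. Rectifier network: with $\mathrm{ReLU}(z)=\max\{0,z\}$ applied componentwise, for input $\theta\in\mathbb{R}^K$ set $h=\mathrm{ReLU}(w\theta+b)\in\mathbb{R}^L$, $A=w_A\cdot h+b_A$, $B=w_B\cdot h+b_B$, where $w\in\mathbb{R}^{L\times K}$, $b,w_A,w_B\in\mathbb{R}^L$, $b_A,b_B\in\mathbb{R}$; $\lambda=(w,b,w_A,b_A,w_B,b_B)\in\Lambda=\mathbb{R}^{KL+3L+2}$. The guiding function is $\alpha(\theta;\lambda)=W(A)e^{iB}F(\theta)$ with a non-negative function $W$ and a prior guiding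 function $F$. Variational state: for $\lambda$ with $C(\lambda)=\int|\alpha(\theta;\lambda)|d\theta$ finite and positive, $|\psi(\lambda)\rangle=C(\lambda)^{-1}\int\alpha(\theta;\lambda)|\phi(\theta)\rangle\,d\theta$, $\langle \mathbb{1}\rangle(\lambda)=\langle\psi(\lambda)|\psi(\lambda)\rangle$, and $|\widetilde\psi(\lambda)\rangle=|\psi(\lambda)\rangle/\sqrt{\langle \mathbb{1}\rangle(\lambda)}$. For a real $x$, $\mathcal{V}_x=\{|\widetilde\psi(\lambda)\rangle:\lambda\in\Lambda,\ \langle \mathbb{1}\rangle(\lambda)\ge x\}$. *)

From HB Require Import structures.
From mathcomp Require Import all_boot all_order all_algebra.
From mathcomp Require Import all_classical all_reals all_analysis.
From mathcomp Require Import complex.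
Set Implicit Arguments. Unset Strict Implicit. Unset Printing Implicit Defensive.
Import Order.TTheory GRing.Theory Num.Theory.
Import numFieldNormedType.Exports.
Local Open Scope classical_set_scope.
Local Open Scope ring_scope.

Section Defs.
Variable R : realType.
Local Notation C := R[i].

Fixpoint integral_RK (K : nat) : ('rV[R]_K -> \bar R) -> \bar R :=
  match K return ('rV[R]_K -> \bar R) -> \bar R with
  | 0 => fun f => f 0
  | K'.+1 => fun f =>
      (\int[@lebesgue_measure R]_t
         integral_RK (fun v : 'rV[R]_K' => f (row_mx (const_mx t : 'rV[R]_1) v)))%E
  end.

Definition cmod (z : C) : R := Num.sqrt (complex.Re z ^+ 2 + complex.Im z ^+ 2).

Definition hnorm (N : nat) (v : 'cV[C]_N) : R :=
  Num.sqrt (\sum_(j < N) cmod (v j 0) ^+ 2).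

Definition rnorm (K : nat) (v : 'rV[R]_K) : R :=
  Num.sqrt (\sum_(k < K) v 0 k ^+ 2).

(* |0>^{\otimes n} : the first computational basis vector of C^(2^n) *)
Definition ket0 (n : nat) : 'cV[C]_(2 ^ n) :=
  \col_(j < 2 ^ n) (if (j : nat) == 0%N then 1 else 0).

Definition adjoint (N : nat) (M : 'M[C]_N) : 'M[C]_N :=
  \matrix_(i, j) (M j i)^*.

Definition unitary (N : nat) (M : 'M[C]_N) : Prop := adjoint M *m M = 1%:M.

Definition ddir (K N : nat) (f : 'rV[R]_K -> 'cV[C]_N) (v : 'rV[R]_K)
  (theta : 'rV[R]_K) : 'cV[C]_N :=
  \col_(j < N) ('D_v (fun t => complex.Re (f t j 0)) theta
                +i* 'D_v (fun t => complex.Im (f t j 0)) theta)%C.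

Definition relu (z : R) : R := Num.max 0 z.

Definition hidden (K L : nat) (w : 'M[R]_(L, K)) (b : 'cV[R]_L)
  (theta : 'rV[R]_K) : 'cV[R]_L :=
  map_mx relu (w *m theta^T + b).

Definition outA (K L : nat) (w : 'M[R]_(L, K)) (b wA : 'cV[R]_L) (bA : R)
  (theta : 'rV[R]_K) : R :=
  \sum_(l < L) wA l 0 * hidden w b theta l 0 + bA.

(* network parameters lambda = (w, b, w_A, b_A, w_B, b_B) in R^{KL+3L+2} *)
Record netparam (K L : nat) := NetParam {
  np_w : 'M[R]_(L, K); np_b : 'cV[R]_L;
  np_wA : 'cV[R]_L; np_bA : R; np_wB : 'cV[R]_L; np_bB : R }.

Definition netA K L (p : netparam K L) (theta : 'rV[R]_K) : R :=
  outA (np_w p) (np_b p) (np_wA p) (np_bA p) theta.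
Definition netB K L (p : netparam K L) (theta : 'rV[R]_K) : R :=
  outA (np_w p) (np_b p) (np_wB p) (np_bB p) theta.

(* guiding function alpha = W(A) e^{iB} F(theta), with W(A) = e^{-A}, F = 1 *)
Definition alpha K L (p : netparam K L) (theta : 'rV[R]_K) : C :=
  ((expR (- netA p theta))%:C)%C * (cos (netB p theta) +i* sin (netB p theta))%C * 1.

Definition normconst K L (p : netparam K L) : \bar R :=
  integral_RK (fun theta => (cmod (alpha p theta))%:E).

Definition psi n K L (phi : 'rV[R]_K -> 'cV[C]_(2 ^ n)) (p : netparam K L)
  : 'cV[C]_(2 ^ n) :=
  \col_(j < 2 ^ n)
    ((((fine (normconst p))^-1)%:C)%C *
    (fine (integral_RK (fun theta => (complex.Re (alpha p theta * phi theta j 0))%:E))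
     +i* fine (integral_RK (fun theta => (complex.Im (alpha p theta * phi theta j 0))%:E)))%C).

Definition expect1 n K L (phi : 'rV[R]_K -> 'cV[C]_(2 ^ n)) (p : netparam K L) : R :=
  hnorm (psi phi p) ^+ 2.

Definition psin n K L (phi : 'rV[R]_K -> 'cV[C]_(2 ^ n)) (p : netparam K L)
  : 'cV[C]_(2 ^ n) :=
  (((Num.sqrt (expect1 phi p))^-1)%:C)%C *: psi phi p.

(* lambda gives an element of V_x: C(lambda) finite and positive (so psi is
   defined), <1>(lambda) > 0 (so psi~ is defined) and <1>(lambda) >= x *)
Definition in_Vx n K L (phi : 'rV[R]_K -> 'cV[C]_(2 ^ n)) (x : R)
  (p : netparam K L) : Prop :=
  (0 < normconst p < +oo)%E /\ 0 < expect1 phi p /\ x <= expect1 phi p.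

End Defs.

From HB Require Import structures.
From mathcomp Require Import all_boot all_order all_algebra.
From mathcomp Require Import all_classical all_reals all_analysis.
From mathcomp Require Import complex measurable_realfun.
From mathcomp Require Import zify ring lra.
Import Order.TTheory GRing.Theory Num.Theory.
Import numFieldNormedType.Exports.
Local Open Scope classical_set_scope.
Local Open Scope ring_scope.
Set Implicit Arguments. Unset Strict Implicit. Unset Printing Implicit Defensive.

(* The rectifier network can output [A(t) = s |t - c|_1] and [B = 0], so that
   [alpha] is a product of Laplace densities of width [1/s] centred at [c] and
   [psi] is the Laplace average of [phi].  The gradient bound makes [phi]
   [xi]-Lipschitz, hence every coordinate of [psi] lies within [2^(K+1) xi / s]
   of that of [phi c].  As [phi c] is a unit vector, [<1>] tends to 1 and the
   normalised state to [phi c] when [s -> oo]. *)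

Section LaplaceIntegral.
Variable R : realType.
Local Notation mu := (@lebesgue_measure R).

Lemma continuous_expR_abs (s c : R) :
  continuous (fun x : R => expR (- (s * `|x - c|))).
Proof.
move=> x; apply: continuous_comp; last exact: continuous_expR.
apply: (@continuousN _ R^o).
apply: (@continuousM _ R^o (fun=> s)); first exact: cst_continuous.
apply: continuous_comp; last exact: norm_continuous.
by move=> y; apply: cvgB; [exact: cvg_id|exact: cvg_cst].
Qed.

Local Open Scope ereal_scope.

Lemma integral_expR_abs0 (s : R) : (0 < s)%R ->
  \int[mu]_x (expR (- (s * `|x|)))%:E = (2 / s)%:E.
Proof.
move=> s0.
have half : \int[mu]_(x in [set x : R | (0 <= x)%R]) (expR (- (s * `|x|)))%:E
    = (s^-1)%:E.
  transitivity (\int[mu]_(x in [set x : R | (0 <= x)%R])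
                 ((s^-1)%:E * (exponential_pdf s x)%:E)).
    apply: eq_integral => x; rewrite inE /= => x0.
    rewrite exponential_pdfE // -EFinM; congr EFin.
    by rewrite mulrA mulVf ?gt_eqF // mul1r ger0_norm // mulNr.
  rewrite ge0_integralZl_EFin //.
  - rewrite -[RHS]mule1; congr (_ * _).
    rewrite -(integral_exponential_pdf s0) integral_mkcond.
    apply: eq_integral => x _; rewrite patchE; case: ifPn => //.
    by rewrite notin_setE /= => /negP; rewrite -ltNge => /lt0_exponential_pdf->.
  - by rewrite -set_itvcy; exact: measurable_itv.
  - by move=> x _; rewrite lee_fin exponential_pdf_ge0 // ltW.
  - apply/measurable_EFinP; apply: measurable_funTS.
    exact: measurable_exponential_pdf.
  - by rewrite invr_ge0 ltW.
rewrite ge0_symfun_integralT.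
- by rewrite half -EFinM.
- by move=> x; rewrite expR_ge0.
- by have := @continuous_expR_abs s 0; under eq_fun do rewrite subr0.
- by move=> x /=; rewrite normrN.
Qed.

Lemma integral_expR_abs (s c : R) : (0 < s)%R ->
  \int[mu]_x (expR (- (s * `|x - c|)))%:E = (2 / s)%:E.
Proof.
move=> s0.
have dF : (fun x : R => x + c)%R^`()%classic = cst 1%R.
  by apply/funext => x; rewrite derive1E deriveD // derive_id derive_cst addr0.
rewrite (@increasing_ge0_integration_by_substitutionT R (fun x => x + c)%R) //.
- rewrite -(integral_expR_abs0 s0); apply: eq_integral => x _.
  by rewrite dF /= !fctE /= mulr1 addrK.
- by move=> x y xy; rewrite ltrD2r.
- by rewrite dF; exact: cst_continuous.
- by rewrite dF; exact: is_cvg_cst.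
- by rewrite dF; exact: is_cvg_cst.
- exact: cvg_addrr_Ny.
- exact: cvg_addrr.
- exact: continuous_expR_abs.
Qed.

Lemma integrable_expR_abs (s c : R) : (0 < s)%R ->
  mu.-integrable setT (fun x => (expR (- (s * `|x - c|)))%:E).
Proof.
move=> s0; apply/integrableP; split.
  by apply/measurable_EFinP; apply: continuous_measurable_fun;
    exact: continuous_expR_abs.
under eq_integral do rewrite /= ger0_norm ?expR_ge0//.
by rewrite integral_expR_abs // ltry.
Qed.

Lemma integral_expR_abs_comb (p q s t c : R) : (0 < s)%R -> (0 < t)%R ->
  \int[mu]_x ((p * expR (- (s * `|x - c|)) + q * expR (- (t * `|x - c|)))%R)%:E
  = (p * (2 / s) + q * (2 / t))%:E.
Proof.
move=> s0 t0; under eq_integral do rewrite EFinD !EFinM.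
have [Is It] := (integrable_expR_abs c s0, integrable_expR_abs c t0).
rewrite integralD //; try exact: integrableZl.
by rewrite !integralZl // !integral_expR_abs.
Qed.

(* No measurability is needed: the integral is a difference of suprema over
   simple functions below the positive and negative parts.  The integrands
   occurring in [integral_RK] are not known to be measurable. *)
Lemma le_integral_lebesgue (f g : R -> \bar R) : (forall x, f x <= g x) ->
  \int[mu]_x f x <= \int[mu]_x g x.
Proof.
move=> fg; rewrite /integral; apply: leeB.
  apply: ereal_sup_le => y [h hf <-]; exists h => //= x.
  apply: le_trans (hf x) _.
  by rewrite !patch_setT !funeposE ge_max !le_max fg lexx !orbT.
apply: ereal_sup_le => y [h hf <-]; exists h => //= x.
apply: le_trans (hf x) _.
by rewrite !patch_setT !funenegE ge_max !le_max leeN2 fg lexx !orbT.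
Qed.

End LaplaceIntegral.

Section LaplaceRK.
Variable R : realType.

Definition l1dist K (c t : 'rV[R]_K) : R := \sum_(k < K) `|t 0 k - c 0 k|.

Definition laplace K (s : R) (c t : 'rV[R]_K) : R := expR (- (s * l1dist c t)).

Lemma l1dist_ge0 K (c t : 'rV[R]_K) : 0 <= l1dist c t.
Proof. exact: sumr_ge0. Qed.

Lemma l1dist_row_mx K (c : 'rV[R]_(1 + K)) (x : R) (v : 'rV[R]_K) :
  l1dist c (row_mx (const_mx x) v) = `|x - c 0 ord0| + l1dist (rsubmx c) v.
Proof.
rewrite /l1dist big_split_ord big_ord1 row_mxEl mxE.
congr (`|_ - c 0 _| + _); first exact: val_inj.
by apply: eq_bigr => i _; rewrite row_mxEr mxE.
Qed.

Lemma le_integral_RK K (f g : 'rV[R]_K -> \bar R) :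
  (forall t, (f t <= g t)%E) -> (integral_RK f <= integral_RK g)%E.
Proof.
elim: K f g => [|K IH] f g fg /=; first exact: fg.
by apply: le_integral_lebesgue => x; apply: IH => v; exact: fg.
Qed.

Lemma integral_RK_laplace_comb K (c : 'rV[R]_K) (p q s t : R) : 0 < s -> 0 < t ->
  integral_RK (fun v => (p * laplace s c v + q * laplace t c v)%:E)
  = (p * (2 / s) ^+ K + q * (2 / t) ^+ K)%:E.
Proof.
move=> s0 t0; elim: K c p q => [|K IH] c p q /=.
  by rewrite /laplace /l1dist big_ord0 !mulr0 !oppr0 !expR0 !mulr1.
pose c' : 'rV_K := rsubmx (c : 'rV_(1 + K)).
under eq_integral => x _.
  rewrite (_ : (fun v => _) = (fun v =>
      ((p * expR (- (s * `|x - c 0 ord0|))) * laplace s c' v +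
       (q * expR (- (t * `|x - c 0 ord0|))) * laplace t c' v)%:E)); last first.
    apply/funext => v.
    by rewrite /laplace !l1dist_row_mx !mulrDr !opprD !expRD !mulrA.
  rewrite IH -!mulrA [_ * (2 / s) ^+ K]mulrC [_ * (2 / t) ^+ K]mulrC !mulrA.
  over.
by rewrite integral_expR_abs_comb // -!mulrA -!exprSr.
Qed.

(* With [y = l1dist c t], this is [y e^(-s y) <= (2/s) e^(-s y / 2)], from
   [z <= e^z] at [z = s y / 2]. *)
Lemma laplace_l1dist_le K (s : R) (c t : 'rV[R]_K) : 0 < s ->
  laplace s c t * l1dist c t <= 2 / s * laplace (s / 2) c t.
Proof.
move=> s0; rewrite /laplace.
set y := l1dist c t; set e := expR (- (s / 2 * y)).
have -> : - (s * y) = - (s / 2 * y) + - (s / 2 * y) by field.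
have hz : s / 2 * y * e <= 1.
  rewrite /e expRN ler_pdivrMr ?expR_gt0 // mul1r.
  by have := expR_ge1Dx (s / 2 * y); lra.
rewrite expRD -/e mulrC mulrA ler_wpM2r ?expR_ge0 // ler_pdivlMr //.
by rewrite (_ : y * e * s = 2 * (s / 2 * y * e)); [lra | field].
Qed.

Lemma laplace_average_near K (c : 'rV[R]_K) (s xi a : R) (g : 'rV[R]_K -> R) :
  0 < s -> 0 <= xi -> (forall t, `|g t - a| <= xi * l1dist c t) ->
  `|((2 / s) ^+ K)^-1 * fine (integral_RK (fun t => (laplace s c t * g t)%:E)) - a|
    <= 2 * xi / s * 2 ^+ K.
Proof.
move=> s0 xi0 hg; set k := 2 * xi / s.
have pw t : `|laplace s c t * g t - a * laplace s c t| <= k * laplace (s / 2) c t.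
  rewrite [a * _]mulrC -mulrBr normrM ger0_norm ?expR_ge0 //.
  apply: le_trans (ler_wpM2l (expR_ge0 _) (hg t)) _.
  rewrite mulrCA (_ : k * _ = xi * (2 / s * laplace (s / 2) c t)); last first.
    by rewrite /k; ring.
  by rewrite ler_wpM2l // laplace_l1dist_le.
have lo t : ((a * laplace s c t + - k * laplace (s / 2) c t)%:E
    <= (laplace s c t * g t)%:E)%E.
  by rewrite lee_fin; move: (pw t); rewrite ler_norml => /andP[]; lra.
have hi t : ((laplace s c t * g t)%:E
    <= (a * laplace s c t + k * laplace (s / 2) c t)%:E)%E.
  by rewrite lee_fin; move: (pw t); rewrite ler_norml => /andP[]; lra.
have s2 : 0 < s / 2 by rewrite divr_gt0.
move: (le_integral_RK lo) (le_integral_RK hi).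
rewrite !integral_RK_laplace_comb //.
case: (integral_RK _) => [r| |] //=; rewrite !lee_fin => Ilo Ihi.
have V0 : 0 < (2 / s) ^+ K by rewrite exprn_gt0 // divr_gt0.
have e4 : (2 / (s / 2)) ^+ K = 2 ^+ K * (2 / s) ^+ K.
  by rewrite -exprMn; congr (_ ^+ _); field; rewrite gt_eqF.
rewrite e4 in Ilo Ihi.
have -> : ((2 / s) ^+ K)^-1 * r - a = (r - a * (2 / s) ^+ K) / (2 / s) ^+ K.
  by field; rewrite gt_eqF.
rewrite normrM normfV (gtr0_norm V0) ler_pdivrMr // ler_norml.
by apply/andP; split; lra.
Qed.

End LaplaceRK.

Section Lipschitz.
Variable R : realType.

Lemma rnorm_ge0 K (v : 'rV[R]_K) : 0 <= rnorm v.
Proof. exact: sqrtr_ge0. Qed.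

Lemma rnormZ K (a : R) (v : 'rV[R]_K) : rnorm (a *: v) = `|a| * rnorm v.
Proof.
rewrite /rnorm -sqrtr_sqr -sqrtrM ?sqr_ge0 // mulr_sumr.
by congr Num.sqrt; apply: eq_bigr => k _; rewrite mxE exprMn.
Qed.

Lemma rnorm_eq0 K (v : 'rV[R]_K) : rnorm v = 0 -> v = 0.
Proof.
move/eqP; rewrite sqrtr_eq0 => h.
have /eqP : \sum_(k < K) v 0 k ^+ 2 = 0.
  by apply/eqP; rewrite eq_le h sumr_ge0 // => k _; exact: sqr_ge0.
rewrite psumr_eq0 => [/allP vk|k _]; last exact: sqr_ge0.
apply/matrixP => i k; rewrite ord1 mxE.
by apply/eqP; rewrite -sqrf_eq0; exact: vk (mem_index_enum k).
Qed.

Lemma rnorm_le_l1dist K (c t : 'rV[R]_K) : rnorm (t - c) <= l1dist c t.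
Proof.
rewrite -(ger0_norm (l1dist_ge0 c t)) -sqrtr_sqr ler_sqrt ?sqr_ge0 //.
rewrite [X in _ <= X]expr2 {2}/l1dist mulr_sumr; apply: ler_sum => k _.
rewrite !mxE -real_normK ?num_real // expr2 [l1dist c t * _]mulrC ler_wpM2l //.
by rewrite /l1dist (bigD1 k) //= lerDl sumr_ge0.
Qed.

(* Mean value theorem along the segment from [c] to [t]. *)
Lemma lipschitz_of_derive_bound K (f : 'rV[R]_K -> R) (xi : R) :
  (forall x, differentiable f x) ->
  (forall x nv, rnorm nv = 1 -> `|'D_nv f x| <= xi) ->
  forall t c, `|f t - f c| <= xi * rnorm (t - c).
Proof.
move=> df hD t c.
have [r_eq0|r_neq0] := eqVneq (rnorm (t - c)) 0.
  move/rnorm_eq0/eqP: (r_eq0); rewrite subr_eq0 r_eq0 => /eqP->.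
  by rewrite subrr normr0 mulr0.
set r := rnorm (t - c) in r_neq0 *.
have r0 : 0 < r by rewrite lt_def r_neq0 rnorm_ge0.
set u := r^-1 *: (t - c).
have u1 : rnorm u = 1 by rewrite rnormZ ger0_norm ?invr_ge0 ?ltW // mulVf.
pose g s := f (c + s *: u).
have quot z : (fun h : R => h^-1 *: ((g \o shift z) (h *: 1) - g z)) =
    (fun h : R => h^-1 *: ((f \o shift (c + z *: u)) (h *: u) - f (c + z *: u))).
  by apply/funext => h /=; rewrite /g [h%:A]mulr1 scalerDl addrCA addrA.
have dg z : derivable g z 1 by rewrite /derivable quot; exact: diff_derivable.
have Dg z : 'D_1 g z = 'D_u f (c + z *: u) by rewrite /derive quot.
have -> : f t - f c = g r - g 0.
  by rewrite /g /u scale0r addr0 scalerA mulfV // scale1r [c + _]addrC subrK.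
have [z _ ->] := @MVT R g (fun z => 'D_1 g z) 0 r r0
  (fun z _ => derivableP (dg z))
  (derivable_within_continuous (fun z _ => dg z)).
rewrite subr0 normrM [`|r|]ger0_norm ?(ltW r0) // ler_pM2r // Dg.
exact: hD.
Qed.

End Lipschitz.

Section L1Network.
Variable R : realType.

Definition l1_coef K (i k : nat) : R := (i == k)%:R - (i == K + k)%:R.

Definition l1_weights K L : 'M[R]_(L, K) := \matrix_(l < L, k < K) l1_coef K l k.

(* Neurons [k] and [K + k] compute [relu (t_k - c_k)] and [relu (c_k - t_k)];
   the remaining [L - 2 K] neurons are idle. *)
Definition l1_net K L (c : 'rV[R]_K) (s : R) : netparam R K L :=
  NetParam (l1_weights K L) (- (l1_weights K L *m c^T)) (const_mx s) 0 0 0.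

Definition l1_preact K (v : 'rV[R]_K) (i : nat) : R :=
  \sum_(k < K) l1_coef K i k * v 0 k.

Lemma l1_preact_lo K (v : 'rV[R]_K) (i : 'I_K) : l1_preact v i = v 0 i.
Proof.
have iK := ltn_ord i; rewrite /l1_preact /l1_coef (bigD1 i) //= eqxx.
rewrite (_ : (i == K + i :> nat) = false); last by apply/eqP; lia.
rewrite subr0 mul1r big1 ?addr0 // => k ki.
rewrite (_ : (i == k :> nat) = false); last by apply/negbTE; rewrite eq_sym.
by rewrite (_ : (i == K + k :> nat) = false) ?subrr ?mul0r //; apply/eqP; lia.
Qed.

Lemma l1_preact_mid K (v : 'rV[R]_K) (i : 'I_K) : l1_preact v (i + K) = - v 0 i.
Proof.
have iK := ltn_ord i.
rewrite /l1_preact /l1_coef (bigD1 i) //= [(i + K)%N]addnC eqxx.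
rewrite (_ : (K + i == i)%N = false); last by apply/eqP; lia.
rewrite sub0r mulN1r big1 ?addr0 // => k ki.
have kK := ltn_ord k; rewrite (_ : (K + i == k)%N = false); last by apply/eqP; lia.
rewrite eqn_add2l (_ : (i == k :> nat) = false) ?subrr ?mul0r //.
by apply/negbTE; rewrite eq_sym.
Qed.

Lemma l1_preact_hi K (v : 'rV[R]_K) (i : nat) : (2 * K <= i)%N -> l1_preact v i = 0.
Proof.
move=> Ki; rewrite /l1_preact /l1_coef big1 // => k _.
have kK := ltn_ord k; rewrite (_ : (i == k)%N = false); last by apply/eqP; lia.
by rewrite (_ : (i == K + k)%N = false) ?subrr ?mul0r //; apply/eqP; lia.
Qed.

Lemma relu_add_reluN (a : R) : relu a + relu (- a) = `|a|.
Proof.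
rewrite /relu; have [a0|a0] := leP 0 a.
  by rewrite (max_idPl _) ?oppr_le0 // addr0 ger0_norm.
by rewrite (max_idPr _) ?oppr_ge0 ?(ltW a0) // add0r ltr0_norm.
Qed.

Lemma sum_relu_l1_preact K L (v : 'rV[R]_K) : (2 * K <= L)%N ->
  \sum_(l < L) relu (l1_preact v l) = \sum_(k < K) `|v 0 k|.
Proof.
move=> KL; rewrite -(big_mkord xpredT (fun l => relu (l1_preact v l))).
rewrite (@big_cat_nat _ _ _ K) //=; last lia.
rewrite (@big_cat_nat _ _ _ (2 * K) K L) //=; last lia.
rewrite [X in _ + (_ + X)]big1_seq ?addr0; last first.
  move=> i /andP[_]; rewrite mem_index_iota => /andP[Ki _].
  by rewrite l1_preact_hi // /relu maxxx.
have shiftK (F : nat -> R) :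
    \sum_(K <= i < 2 * K) F i = \sum_(0 <= i < K) F (i + K)%N.
  by rewrite -{1}(add0n K) big_addn mul2n -addnn addnK.
rewrite shiftK !big_mkord -big_split /=.
by apply: eq_bigr => i _; rewrite l1_preact_lo l1_preact_mid relu_add_reluN.
Qed.

Lemma netA_l1_net K L (c t : 'rV[R]_K) (s : R) : (2 * K <= L)%N ->
  netA (l1_net L c s) t = s * l1dist c t.
Proof.
move=> KL; rewrite /netA /outA /hidden /= addr0.
transitivity (\sum_(l < L) s * relu (l1_preact (t - c) l)).
  apply: eq_bigr => l _; rewrite !mxE; congr (_ * relu _).
  rewrite /l1_preact -sumrN -big_split /=; apply: eq_bigr => k _.
  by rewrite !mxE mulrBr.
rewrite -mulr_sumr sum_relu_l1_preact //; congr (_ * _).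
by apply: eq_bigr => k _; rewrite !mxE.
Qed.

Lemma netB_l1_net K L (c t : 'rV[R]_K) (s : R) : netB (l1_net L c s) t = 0.
Proof. by rewrite /netB /outA /= addr0 big1 // => l _; rewrite mxE mul0r. Qed.

Lemma alpha_l1_net K L (c t : 'rV[R]_K) (s : R) : (2 * K <= L)%N ->
  alpha (l1_net L c s) t = ((laplace s c t)%:C)%C.
Proof.
move=> KL; rewrite /alpha netA_l1_net // netB_l1_net cos0 sin0.
by rewrite (_ : (1 +i* 0)%C = 1) // !mulr1.
Qed.

End L1Network.

Section ComplexCoordinates.
Variable R : realType.
Local Notation C := R[i].

Lemma Re_sum N (F : 'I_N -> C) :
  complex.Re (\sum_(i < N) F i) = \sum_(i < N) complex.Re (F i).
Proof. by apply: (big_morph (@complex.Re R)) => // -[a b] [c d]. Qed.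

Lemma ReB (z w : C) : complex.Re (z - w) = complex.Re z - complex.Re w.
Proof. by case: z; case: w. Qed.

Lemma ImB (z w : C) : complex.Im (z - w) = complex.Im z - complex.Im w.
Proof. by case: z; case: w. Qed.

Lemma Re_realM (x : R) (z : C) : complex.Re ((x%:C)%C * z) = x * complex.Re z.
Proof. by case: z => a b /=; rewrite mul0r subr0. Qed.

Lemma Im_realM (x : R) (z : C) : complex.Im ((x%:C)%C * z) = x * complex.Im z.
Proof. by case: z => a b /=; rewrite mul0r addr0. Qed.

Lemma cmod_sqr (z : C) : cmod z ^+ 2 = complex.Re z ^+ 2 + complex.Im z ^+ 2.
Proof. by rewrite sqr_sqrtr // addr_ge0 // sqr_ge0. Qed.

Lemma cmod_real (x : R) : cmod (x%:C)%C = `|x|.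
Proof. by rewrite /cmod /= expr0n addr0 sqrtr_sqr. Qed.

Lemma Re_le_cmod (z : C) : `|complex.Re z| <= cmod z.
Proof. by rewrite -sqrtr_sqr ler_sqrt ?addr_ge0 ?sqr_ge0 // lerDl sqr_ge0. Qed.

Lemma Im_le_cmod (z : C) : `|complex.Im z| <= cmod z.
Proof. by rewrite -sqrtr_sqr ler_sqrt ?addr_ge0 ?sqr_ge0 // lerDr sqr_ge0. Qed.

Definition coord_close N (v w : 'cV[C]_N) (e : R) : Prop :=
  forall j, `|complex.Re (v j 0) - complex.Re (w j 0)| <= e /\
            `|complex.Im (v j 0) - complex.Im (w j 0)| <= e.

Lemma hnorm_sqr N (v : 'cV[C]_N) :
  hnorm v ^+ 2 = \sum_(j < N) (complex.Re (v j 0) ^+ 2 + complex.Im (v j 0) ^+ 2).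
Proof.
rewrite sqr_sqrtr; last by apply: sumr_ge0 => j _; exact: sqr_ge0.
by apply: eq_bigr => j _; rewrite cmod_sqr.
Qed.

Lemma cmod_le_hnorm N (v : 'cV[C]_N) j : cmod (v j 0) <= hnorm v.
Proof.
rewrite -(ger0_norm (sqrtr_ge0 _ : 0 <= cmod (v j 0))) -sqrtr_sqr.
rewrite ler_sqrt ?sumr_ge0 // => [|k _]; last exact: sqr_ge0.
by rewrite (bigD1 j) //= lerDl sumr_ge0 // => k _; exact: sqr_ge0.
Qed.

Lemma hnorm_col_unitary N (M : 'M[C]_N) (i : 'I_N) : unitary M -> hnorm (col i M) = 1.
Proof.
move=> /matrixP /(_ i i); rewrite !mxE eqxx => /(congr1 (@complex.Re R)).
rewrite Re_sum /= => sum1; rewrite -[RHS]sqrtr1 -sum1; congr Num.sqrt.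
apply: eq_bigr => j _; rewrite cmod_sqr !mxE.
by case: (M j i) => a b /=; rewrite mulNr opprK !expr2.
Qed.

Lemma mulmx_ket0 n (M : 'M[C]_(2 ^ n)) (i : 'I_(2 ^ n)) : i = 0%N :> nat ->
  M *m ket0 R n = col i M.
Proof.
move=> i0; apply/matrixP => j k; rewrite !mxE (bigD1 i) //= mxE i0 eqxx mulr1.
rewrite ord1 big1 ?addr0 // => l li; rewrite mxE.
have l_neq0 : (l : nat) != 0%N.
  by apply: contraNneq li => l0; apply/eqP/val_inj; rewrite /= l0 i0.
by rewrite (negbTE l_neq0) mulr0.
Qed.

End ComplexCoordinates.

Section Normalization.
Variable R : realType.

Lemma sqr_near (a p d : R) : `|a| <= 1 -> `|p - a| <= d -> d <= 1 ->
  `|p ^+ 2 - a ^+ 2| <= 3 * d.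
Proof.
move=> a1 pa d1.
have -> : p ^+ 2 - a ^+ 2 = (p - a) * (p - a + 2 * a) by rewrite !expr2; ring.
have sum3 : `|p - a + 2 * a| <= 3.
  apply: le_trans (ler_normD _ _) _; rewrite normrM ger0_norm //.
  have : `|p - a| <= 1 by apply: le_trans d1.
  lra.
rewrite normrM; have := normr_ge0 (p - a); have := normr_ge0 (p - a + 2 * a).
nra.
Qed.

Lemma div_near (a p d eta r : R) : `|a| <= 1 -> `|p - a| <= d ->
  `|1 - r| <= eta -> 1 / 2 <= r -> `|p / r - a| <= 2 * (d + eta).
Proof.
move=> a1 pa r1 r2; have r0 : 0 < r by apply: lt_le_trans r2; lra.
have -> : p / r - a = ((p - a) + a * (1 - r)) / r by field; rewrite gt_eqF.
rewrite normrM normfV (gtr0_norm r0) ler_pdivrMr //.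
have : `|(p - a) + a * (1 - r)| <= d + eta.
  apply: le_trans (ler_normD _ _) _; rewrite normrM.
  by have := normr_ge0 a; have := normr_ge0 (1 - r); nra.
by have := normr_ge0 (p - a + a * (1 - r)); nra.
Qed.

Section NearUnitVector.
Variables (N : nat) (a b p q : 'I_N -> R) (d : R).
Hypothesis unit_ab : \sum_(j < N) (a j ^+ 2 + b j ^+ 2) = 1.
Hypotheses (near_p : forall j, `|p j - a j| <= d)
           (near_q : forall j, `|q j - b j| <= d).
Hypothesis d_le1 : d <= 1.

Local Notation S := (\sum_(j < N) (p j ^+ 2 + q j ^+ 2)).

Lemma unit_coord_le1 j : `|a j| <= 1 /\ `|b j| <= 1.
Proof.
have : a j ^+ 2 + b j ^+ 2 <= 1.
  rewrite -unit_ab (bigD1 j) //= lerDl sumr_ge0 // => k _.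
  by rewrite addr_ge0 // sqr_ge0.
have := sqr_ge0 (b j); have := sqr_ge0 (a j) => a2 b2 ab1.
by split; rewrite ler_norml; apply/andP; split; nra.
Qed.

Lemma sum_sqr_near : `|S - 1| <= 6 * N%:R * d.
Proof.
rewrite -[X in `|_ - X|]unit_ab -sumrB.
rewrite (_ : 6 * N%:R * d = \sum_(j < N) (6 * d)); last first.
  by rewrite sumr_const card_ord -mulr_natr; ring.
apply: le_trans (ler_norm_sum _ _ _) (ler_sum _ _) => j _.
rewrite (_ : _ - _ = (p j ^+ 2 - a j ^+ 2) + (q j ^+ 2 - b j ^+ 2)); last by ring.
apply: le_trans (ler_normD _ _) _; have [a1 b1] := unit_coord_le1 j.
by have := sqr_near a1 (near_p j) d_le1; have := sqr_near b1 (near_q j) d_le1; lra.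
Qed.

Lemma sqrt_sum_sqr_near : 6 * N%:R * d <= 1 / 2 ->
  1 / 2 <= Num.sqrt S /\ `|1 - Num.sqrt S| <= 6 * N%:R * d.
Proof.
move=> d_small; have := sum_sqr_near; rewrite ler_norml => /andP[S_lo S_hi].
have rr : Num.sqrt S ^+ 2 = S by rewrite sqr_sqrtr //; lra.
set r := Num.sqrt S in rr *.
have r2 : 1 / 2 <= r.
  rewrite leNgt; apply/negP => r_lt.
  have : r * r < 1 / 2 * (1 / 2) by rewrite ltr_pM ?sqrtr_ge0.
  by rewrite -expr2 rr; lra.
have e : `|1 - r| * (1 + r) = `|S - 1|.
  rewrite -[1 + r]ger0_norm; last lra.
  by rewrite -normrM -normrN; congr `|_|; rewrite -rr; ring.
split => //; apply: le_trans sum_sqr_near.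
by rewrite -e ler_peMr //; lra.
Qed.

Lemma normalized_sum_sqr_le : 6 * N%:R * d <= 1 / 2 ->
  \sum_(j < N) ((p j / Num.sqrt S - a j) ^+ 2 + (q j / Num.sqrt S - b j) ^+ 2)
    <= 8 * N%:R * ((6 * N%:R + 1) * d) ^+ 2.
Proof.
move=> /sqrt_sum_sqr_near[r2 r1].
rewrite (_ : 8 * _ * _ = \sum_(j < N) (2 * (2 * (d + 6 * N%:R * d)) ^+ 2)); last first.
  by rewrite sumr_const card_ord -mulr_natr; ring.
apply: ler_sum => j _; have [a1 b1] := unit_coord_le1 j.
have d0 : 0 <= d := le_trans (normr_ge0 _) (near_p j).
have Nd0 : 0 <= 6 * N%:R * d by rewrite !mulr_ge0.
have sq_le (z : R) : `|z| <= 2 * (d + 6 * N%:R * d) ->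
    z ^+ 2 <= (2 * (d + 6 * N%:R * d)) ^+ 2.
  by move=> z_le; rewrite -real_normK ?num_real // lerXn2r // nnegrE; lra.
have := sq_le _ (div_near a1 (near_p j) r1 r2).
by have := sq_le _ (div_near b1 (near_q j) r1 r2); lra.
Qed.

End NearUnitVector.

Lemma normalize_near N (x eps : R) : (0 < N)%N -> x < 1 -> 0 < eps ->
  exists2 delta : R, 0 < delta &
  forall v a : 'cV[R[i]]_N, hnorm a = 1 -> coord_close v a delta ->
  [/\ 0 < hnorm v ^+ 2, x <= hnorm v ^+ 2 &
      hnorm ((((Num.sqrt (hnorm v ^+ 2))^-1)%:C)%C *: v - a) < eps].
Proof.
move=> N0 x1 e0; set M : R := N%:R.
have M1 : 1 <= M by rewrite ler1n.
set d := Num.min (Num.min (1 / (12 * M)) ((1 - x) / (6 * M)))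
                 (eps / (8 * M * (6 * M + 1))).
have d0 : 0 < d.
  by rewrite !lt_min !divr_gt0 ?subr_gt0 ?mulr_gt0 ?addr_gt0 //; lra.
have [/andP[d_a d_b] d_c] : (d <= 1 / (12 * M)) && (d <= (1 - x) / (6 * M))
    /\ d <= eps / (8 * M * (6 * M + 1)) by apply/andP; rewrite -!le_min.
have d_le1 : d <= 1.
  by apply: le_trans d_a _; rewrite ler_pdivrMr ?mulr_gt0 //; lra.
have d_small : 6 * M * d <= 1 / 2.
  by move: d_a; rewrite ler_pdivlMr ?mulr_gt0 //; lra.
have d_x : 6 * M * d <= 1 - x.
  by move: d_b; rewrite ler_pdivlMr ?mulr_gt0 //; lra.
have d_eps : 8 * M * ((6 * M + 1) * d) <= eps.
  by move: d_c; rewrite ler_pdivlMr ?mulr_gt0 ?addr_gt0 //; lra.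
exists d => // v a a1 near.
have unit_a : \sum_(j < N) (complex.Re (a j 0) ^+ 2 + complex.Im (a j 0) ^+ 2) = 1.
  by rewrite -hnorm_sqr a1 expr1n.
have near_Re j := (near j).1; have near_Im j := (near j).2.
have := sum_sqr_near unit_a near_Re near_Im d_le1.
have := normalized_sum_sqr_le unit_a near_Re near_Im d_le1 d_small.
rewrite -/M -hnorm_sqr ler_norml => err /andP[S_lo _].
split; [lra | lra |].
rewrite -(ger0_norm (ltW e0)) -sqrtr_sqr ltr_sqrt ?exprn_gt0 //.
set q := (6 * M + 1) * d in d_eps err.
have q0 : 0 <= q by rewrite mulr_ge0 //; lra.
apply: le_lt_trans (_ : _ <= 8 * M * q ^+ 2) _.
  apply: le_trans err; apply: ler_sum => j _.
  by rewrite cmod_sqr !mxE ReB ImB Re_realM Im_realM ![_^-1 * _]mulrC.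
have q_eps : 8 * M * q ^+ 2 <= eps * q by rewrite expr2 mulrA ler_wpM2r.
have q_le : eps * q <= eps * (eps / 8).
  rewrite ler_wpM2l ?(ltW e0) // ler_pdivlMr //.
  have : 0 <= q * (M - 1) by rewrite mulr_ge0 ?subr_ge0.
  lra.
apply: le_lt_trans q_eps (le_lt_trans q_le _).
by rewrite expr2 ltr_pM2l // ltr_pdivrMr //; lra.
Qed.

End Normalization.

Section LaplaceState.
Variable R : realType.
Local Notation C := R[i].

Lemma coord_lipschitz K N (f : 'rV[R]_K -> 'cV[C]_N) (xi : R) :
  (forall t j, differentiable (fun t => complex.Re (f t j 0)) t /\
               differentiable (fun t => complex.Im (f t j 0)) t) ->
  (forall t nv, rnorm nv = 1 -> hnorm (ddir f nv t) <= xi) -> 0 <= xi ->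
  forall c t, coord_close (f t) (f c) (xi * l1dist c t).
Proof.
move=> df f_bound xi0 c t j.
have to_l1 : xi * rnorm (t - c) <= xi * l1dist c t.
  by rewrite ler_wpM2l // rnorm_le_l1dist.
split; apply: le_trans to_l1.
- apply: (@lipschitz_of_derive_bound _ _ (fun t => complex.Re (f t j 0)))
    => [y|y nv nv1]; first exact: (df y j).1.
  apply: le_trans (f_bound y nv nv1); apply: le_trans (cmod_le_hnorm _ j).
  by apply: le_trans (Re_le_cmod _); rewrite mxE.
- apply: (@lipschitz_of_derive_bound _ _ (fun t => complex.Im (f t j 0)))
    => [y|y nv nv1]; first exact: (df y j).2.
  apply: le_trans (f_bound y nv nv1); apply: le_trans (cmod_le_hnorm _ j).
  by apply: le_trans (Im_le_cmod _); rewrite mxE.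
Qed.

Lemma normconst_l1_net K L (c : 'rV[R]_K) (s : R) : (2 * K <= L)%N -> 0 < s ->
  normconst (l1_net L c s) = ((2 / s) ^+ K)%:E.
Proof.
move=> KL s0; rewrite /normconst (_ : (fun t => _) =
    fun t => (1 * laplace s c t + 0 * laplace s c t)%:E).
  by rewrite integral_RK_laplace_comb // mul0r addr0 mul1r.
apply/funext => t.
by rewrite alpha_l1_net // cmod_real ger0_norm ?expR_ge0 // mul0r addr0 mul1r.
Qed.

Lemma psi_l1_net_near n K L (phi : 'rV[R]_K -> 'cV[C]_(2 ^ n)) (c : 'rV[R]_K)
    (xi s : R) : (2 * K <= L)%N -> 0 <= xi -> 0 < s ->
  (forall t, coord_close (phi t) (phi c) (xi * l1dist c t)) ->
  coord_close (psi phi (l1_net L c s)) (phi c) (2 * xi / s * 2 ^+ K).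
Proof.
move=> KL xi0 s0 phi_lip j.
rewrite /psi !mxE Re_realM Im_realM normconst_l1_net //=.
under eq_fun => t do rewrite alpha_l1_net // Re_realM.
under [X in _ /\ `|_ * fine (integral_RK X) - _| <= _]eq_fun => t do
  rewrite alpha_l1_net // Im_realM.
by split; apply: laplace_average_near => // t; have [] := phi_lip t j.
Qed.

End LaplaceState.

Unset Implicit Arguments.

Theorem theorem3 (R : realType) (n K L : nat)
  (U : 'rV[R]_K -> 'M[R[i]]_(2 ^ n))
  (U_unitary : forall theta, unitary (U theta))
  (U_diff : forall theta (a b : 'I_(2 ^ n)),
     differentiable (fun t => complex.Re (U t a b)) theta /\
     differentiable (fun t => complex.Im (U t a b)) theta)
  (xi : R) (xi_gt0 : 0 < xi)
  (grad_bound : forall (theta nv : 'rV[R]_K), rnorm nv = 1 ->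
     hnorm (ddir (fun t => U t *m @ket0 R n) nv theta) <= xi)
  (HL : (2 * K <= L)%N) :
  forall (theta : 'rV[R]_K) (x : R), x < 1 ->
  forall eps : R, 0 < eps ->
  exists p : netparam R K L,
    in_Vx (fun t => U t *m @ket0 R n) x p /\
    hnorm (psin (fun t => U t *m @ket0 R n) p - U theta *m @ket0 R n) < eps.
Proof.
move=> c x x1 eps e0.
set phi := fun t => U t *m ket0 R n.
have dim0 : (0 < 2 ^ n)%N by rewrite expn_gt0.
have phi_col t : phi t = col (Ordinal dim0) (U t) by exact: mulmx_ket0.
have phi_diff t j : differentiable (fun t => complex.Re (phi t j 0)) t /\
                    differentiable (fun t => complex.Im (phi t j 0)) t.
  under eq_fun => t' do rewrite phi_col mxE.
  by under [X in _ /\ differentiable X _]eq_fun => t' do rewrite phi_col mxE.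
have [delta delta0 near] := normalize_near dim0 x1 e0.
pose s := 2 * xi * 2 ^+ K / delta.
have s0 : 0 < s by rewrite divr_gt0 // !mulr_gt0 // exprn_gt0.
have err_s : 2 * xi / s * 2 ^+ K = delta.
  by rewrite /s; field; rewrite !gt_eqF ?exprn_gt0.
have psi_near := psi_l1_net_near HL (ltW xi_gt0) s0
  (coord_lipschitz phi_diff grad_bound (ltW xi_gt0) c).
rewrite err_s in psi_near.
have phi_unit : hnorm (phi c) = 1 by rewrite phi_col hnorm_col_unitary.
have [E0 Ex Eeps] := near _ _ phi_unit psi_near.
exists (l1_net L c s); split => //; split => //.
by rewrite normconst_l1_net // ltry andbT lte_fin exprn_gt0 // divr_gt0.
Qed.
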